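(* Let $G$ be a Garside group with Garside element $\Delta$, let $g\in G$, and let $a,b,k$ be nonzero integers. (i) If $g^{kb}$ is conjugate to $\Delta^{ka}$, then $g^b$ is conjugate to $\Delta^a$. (ii) If each of $g^a$ and $g^b$ is conjugate to a power of $\Delta$, then $g^{\gcd(a,b)}$ is conjugate to a power of $\Delta$.
   Context: $G$ is a Garside group: the group of fractions of a Garside monoid $G^+$ (an atomic, left and right cancellative monoid that is a lattice under both the prefix order and the suffix order, with a distinguished element $\Delta$, the Garside element, whose left and right divisors coincide, form a finite set, and generate $G^+$). *)

(* an abstract (possibly infinite) group with explicit axioms,
   and the Garside structure given by a submonoid P (= G^+) and Delta. *)
From Stdlib Require Import ZArith List.
Import ListNotations.

Record Group := {
  car :> Type;
  gmul : car -> car -> car;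
  gone : car;
  ginv : car -> car;
  gmulA : forall x y z, gmul x (gmul y z) = gmul (gmul x y) z;
  gmul1l : forall x, gmul gone x = x;
  gmul1r : forall x, gmul x gone = x;
  gmulVl : forall x, gmul (ginv x) x = gone;
  gmulVr : forall x, gmul x (ginv x) = gone
}.

Arguments gmul {g}.
Arguments gone {g}.
Arguments ginv {g}.

Section Defs.
Variable G : Group.

Definition gprod (l : list G) : G := fold_right gmul gone l.

Fixpoint gpow (x : G) (n : nat) : G :=
  match n with O => gone | S n => gmul x (gpow x n) end.

Definition zpow (x : G) (z : Z) : G :=
  match z with
  | Z0 => gone
  | Zpos p => gpow x (Pos.to_nat p)
  | Zneg p => ginv (gpow x (Pos.to_nat p))
  end.

Definition conjugate (x y : G) : Prop := exists h : G, gmul (ginv h) (gmul x h) = y.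

Variable P : G -> Prop.

Definition submonoid : Prop :=
  P gone /\ forall x y, P x -> P y -> P (gmul x y).

Inductive gen : G -> Prop :=
| gen_in : forall x, P x -> gen x
| gen_one : gen gone
| gen_mul : forall x y, gen x -> gen y -> gen (gmul x y)
| gen_inv : forall x, gen x -> gen (ginv x).

Definition prefix (a b : G) : Prop := exists c, P c /\ gmul a c = b.
Definition suffix (a b : G) : Prop := exists c, P c /\ gmul c a = b.

Definition atomic : Prop :=
  forall x, P x -> exists N : nat, forall l : list G,
    Forall (fun y => P y /\ y <> gone) l -> gprod l = x -> length l <= N.

Definition lattice_on (le : G -> G -> Prop) : Prop :=
  forall a b, P a -> P b ->
    (exists m, P m /\ le m a /\ le m b /\
       forall c, P c -> le c a -> le c b -> le c m) /\
    (exists j, P j /\ le a j /\ le b j /\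
       forall c, P c -> le a c -> le b c -> le j c).

Definition garside_element (D : G) : Prop :=
  P D /\
  (forall x, P x -> (prefix x D <-> suffix x D)) /\
  (exists l : list G, forall x, P x -> prefix x D -> In x l) /\
  (forall x, P x -> exists l : list G,
      Forall (fun y => P y /\ prefix y D) l /\ gprod l = x).

(* G is a Garside group: group of fractions of the Garside monoid P
   (P is a submonoid of G, hence cancellative, which generates G). *)
Definition garside_group (D : G) : Prop :=
  submonoid /\ (forall g, gen g) /\ atomic /\
  lattice_on prefix /\ lattice_on suffix /\ garside_element D.

End Defs.

(* Let z = Delta^e be a central power of Delta.  Such an e >= 1 exists because
   conjugation by Delta permutes the finite set of simple elements, so some power
   fixes all simples, hence all of P, hence all of G (Delta_power_central).
   Multiplying by powers of z moves any element into P (shift_into_P).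

   The core fact (positive_root_conjugate): if r is in P and r^N = Delta^(N A),
   then the map F x = Delta^-A x r is monotone for the suffix order, periodic
   (F^(N e) = id since Delta^(N e A) is central) and sends the orbit of
   Delta^(N e A) into P.  As P is a lattice and P has no nontrivial units (by
   atomicity), the join of that orbit is a fixed point J, i.e. J r J⁻¹ = Delta^A.
   Shifting by central powers of Delta extends this to h^n ~ Delta^(n a) for all
   h and n <> 0 (power_root_conjugate), which is part (i).  For part (ii), distinct
   powers of a nontrivial Delta are not conjugate (Delta_powers_conjugate), and a
   divisibility argument with gcd(a, b) reduces to part (i). *)
From Stdlib Require Import ZArith List Lia Classical.
Import ListNotations.

Section GroupFacts.
Variable G : Group.
Local Infix "**" := (@gmul G) (at level 40, left associativity).
Local Notation "1" := (@gone G).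

Lemma mul_cancel_l (x y z : G) : x ** y = x ** z -> y = z.
Proof.
  intro H. rewrite <- (gmul1l G y), <- (gmul1l G z), <- (gmulVl G x), <- !gmulA, H.
  reflexivity.
Qed.

Lemma mul_cancel_r (x y z : G) : y ** x = z ** x -> y = z.
Proof.
  intro H. rewrite <- (gmul1r G y), <- (gmul1r G z), <- (gmulVr G x), !gmulA, H.
  reflexivity.
Qed.

Lemma inv_unique (x y : G) : x ** y = 1 -> y = ginv x.
Proof. intro H. apply (mul_cancel_l x). rewrite H, gmulVr. reflexivity. Qed.

Lemma inv_mul (x y : G) : ginv (x ** y) = ginv y ** ginv x.
Proof.
  symmetry. apply inv_unique.
  rewrite <- gmulA, (gmulA _ y), gmulVr, gmul1l, gmulVr. reflexivity.
Qed.

Lemma inv_inv (x : G) : ginv (ginv x) = x.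
Proof. symmetry. apply inv_unique, gmulVl. Qed.

Lemma inv_one : ginv 1 = 1.
Proof. symmetry. apply inv_unique, gmul1l. Qed.

(* Conjugation [x ↦ y⁻¹ x y]; [conjugate G x w] unfolds to [exists y, conj_by y x = w]. *)
Definition conj_by (y x : G) : G := ginv y ** (x ** y).

Lemma conj_by_one (x : G) : conj_by 1 x = x.
Proof. unfold conj_by. rewrite inv_one, gmul1l, gmul1r. reflexivity. Qed.

Lemma conj_by_mul (y x x' : G) : conj_by y (x ** x') = conj_by y x ** conj_by y x'.
Proof.
  unfold conj_by. rewrite !gmulA. f_equal.
  rewrite <- !gmulA, (gmulA _ y), gmulVr, gmul1l. reflexivity.
Qed.

Lemma conj_by_comp (y y' x : G) : conj_by (y ** y') x = conj_by y' (conj_by y x).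
Proof. unfold conj_by. rewrite inv_mul, !gmulA. reflexivity. Qed.

Lemma conj_by_inj (y x x' : G) : conj_by y x = conj_by y x' -> x = x'.
Proof. unfold conj_by. intro H. apply mul_cancel_l, mul_cancel_r in H. exact H. Qed.

Definition central (z : G) : Prop := forall x, z ** x = x ** z.

Lemma central_one : central 1.
Proof. intro x. rewrite gmul1l, gmul1r. reflexivity. Qed.

Lemma central_conj_invariant (y z : G) : central z -> conj_by y z = z.
Proof. intro Hz. unfold conj_by. rewrite (Hz y), gmulA, gmulVl, gmul1l. reflexivity. Qed.

Lemma conj_by_central_trivial (z x : G) : central z -> conj_by z x = x.
Proof. intro Hz. unfold conj_by. rewrite <- Hz, gmulA, gmulVl, gmul1l. reflexivity. Qed.

Lemma conjugate_trans (x y z : G) : conjugate G x y -> conjugate G y z -> conjugate G x z.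
Proof.
  intros [h1 <-] [h2 <-]. exists (h1 ** h2). apply conj_by_comp.
Qed.

Lemma conjugate_sym (x y : G) : conjugate G x y -> conjugate G y x.
Proof.
  intros [h <-]. exists (ginv h). change (conj_by (ginv h) (conj_by h x) = x).
  rewrite <- conj_by_comp, gmulVr. apply conj_by_one.
Qed.

Lemma conjugate_central (z w : G) : central z -> conjugate G z w -> z = w.
Proof. intros Hz [h <-]. symmetry. apply central_conj_invariant, Hz. Qed.

Lemma conj_by_gpow_fixed (y x : G) k : conj_by y x = x -> conj_by (gpow G y k) x = x.
Proof.
  intro H. induction k; simpl. { apply conj_by_one. }
  rewrite conj_by_comp, H. exact IHk.
Qed.

Lemma conj_by_gprod (y : G) l : conj_by y (gprod G l) = gprod G (map (conj_by y) l).
Proof.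
  induction l as [|x l IH]; simpl. { apply central_conj_invariant, central_one. }
  rewrite conj_by_mul, IH. reflexivity.
Qed.

Lemma central_inv (z : G) : central z -> central (ginv z).
Proof.
  intros Hz x. apply (mul_cancel_l z).
  rewrite gmulA, gmulVr, gmul1l, gmulA, Hz, <- gmulA, gmulVr, gmul1r. reflexivity.
Qed.

Lemma gpow_S_r (x : G) n : gpow G x (S n) = gpow G x n ** x.
Proof.
  induction n; simpl. { rewrite gmul1r, gmul1l. reflexivity. }
  simpl in IHn. rewrite IHn, gmulA, IHn. reflexivity.
Qed.

Lemma gpow_add (x : G) m n : gpow G x (m + n) = gpow G x m ** gpow G x n.
Proof. induction m; simpl. { rewrite gmul1l. reflexivity. } rewrite IHm, gmulA. reflexivity. Qed.

Lemma gpow_mul (x : G) m n : gpow G x (m * n) = gpow G (gpow G x m) n.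
Proof.
  induction n; simpl. { rewrite Nat.mul_0_r. reflexivity. }
  rewrite Nat.mul_succ_r, gpow_add, IHn, <- gpow_S_r. reflexivity.
Qed.

Lemma gpow_one n : gpow G 1 n = 1.
Proof. induction n; simpl; [|rewrite IHn, gmul1l]; reflexivity. Qed.

Lemma central_gpow (z : G) n : central z -> central (gpow G z n).
Proof.
  intros Hz x. induction n; simpl. { rewrite gmul1l, gmul1r. reflexivity. }
  rewrite <- gmulA, IHn, gmulA, Hz, gmulA. reflexivity.
Qed.

Lemma gpow_mul_central (z x : G) n :
  central z -> gpow G (z ** x) n = gpow G z n ** gpow G x n.
Proof.
  intro Hz. induction n; simpl. { rewrite gmul1l. reflexivity. }
  rewrite IHn, !gmulA. f_equal. rewrite <- !gmulA. f_equal. symmetry. apply central_gpow, Hz.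
Qed.

Lemma conj_by_gpow (y x : G) n : conj_by y (gpow G x n) = gpow G (conj_by y x) n.
Proof.
  induction n; simpl. { unfold conj_by. rewrite gmul1l, gmulVl. reflexivity. }
  rewrite conj_by_mul, IHn. reflexivity.
Qed.

Lemma zpow_nat (x : G) n : zpow G x (Z.of_nat n) = gpow G x n.
Proof. destruct n; simpl; [|rewrite SuccNat2Pos.id_succ]; reflexivity. Qed.

Lemma zpow_sign (x : G) z : zpow G x z =
  if (0 <=? z)%Z then gpow G x (Z.to_nat z) else ginv (gpow G x (Z.to_nat (- z))).
Proof. destruct z; reflexivity. Qed.

Lemma zpow_succ (x : G) z : zpow G x (Z.succ z) = zpow G x z ** x.
Proof.
  rewrite !zpow_sign. destruct (Z.leb_spec 0 z).
  - replace (0 <=? Z.succ z)%Z with true by (symmetry; apply Z.leb_le; lia).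
    replace (Z.to_nat (Z.succ z)) with (S (Z.to_nat z)) by lia. apply gpow_S_r.
  - destruct (Z.eq_dec z (-1)) as [->|Hne].
    { simpl. rewrite gmul1r, gmulVl. reflexivity. }
    replace (0 <=? Z.succ z)%Z with false by (symmetry; apply Z.leb_gt; lia).
    replace (Z.to_nat (- z)) with (S (Z.to_nat (- Z.succ z))) by lia.
    simpl. rewrite inv_mul, <- gmulA, gmulVl, gmul1r. reflexivity.
Qed.

Lemma zpow_add (x : G) m n : zpow G x (m + n) = zpow G x m ** zpow G x n.
Proof.
  revert n. apply Z.peano_ind.
  - rewrite Z.add_0_r. simpl. rewrite gmul1r. reflexivity.
  - intros n IH. rewrite Z.add_succ_r, !zpow_succ, IH, gmulA. reflexivity.
  - intros n IH. apply (mul_cancel_r x). rewrite <- zpow_succ, <- gmulA, <- zpow_succ.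
    replace (Z.succ (m + Z.pred n)) with (m + n)%Z by lia. rewrite Z.succ_pred. exact IH.
Qed.

Lemma zpow_opp (x : G) z : zpow G x (- z) = ginv (zpow G x z).
Proof. apply inv_unique. rewrite <- zpow_add, Z.add_opp_diag_r. reflexivity. Qed.

Lemma zpow_mul (x : G) m n : zpow G x (m * n) = zpow G (zpow G x m) n.
Proof.
  revert n. apply Z.peano_ind.
  - rewrite Z.mul_0_r. reflexivity.
  - intros n IH. rewrite Z.mul_succ_r, zpow_add, zpow_succ, IH. reflexivity.
  - intros n IH. apply (mul_cancel_r (zpow G x m)). rewrite <- zpow_add, <- zpow_succ.
    replace (m * Z.pred n + m)%Z with (m * n)%Z by lia. rewrite Z.succ_pred. exact IH.
Qed.

Lemma zpow_of_one z : zpow G 1 z = 1.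
Proof. destruct z; simpl; rewrite ?gpow_one, ?inv_one; reflexivity. Qed.

Lemma conj_by_zpow (y x : G) z : conj_by y (zpow G x z) = zpow G (conj_by y x) z.
Proof.
  destruct z; simpl.
  - apply central_conj_invariant, central_one.
  - apply conj_by_gpow.
  - rewrite <- conj_by_gpow. apply inv_unique.
    rewrite <- conj_by_mul, gmulVr. apply central_conj_invariant, central_one.
Qed.

Lemma central_zpow (z : G) n : central z -> central (zpow G z n).
Proof. intro Hz. destruct n; simpl; auto using central_one, central_gpow, central_inv. Qed.

Lemma conjugate_zpow (x y : G) z :
  conjugate G x y -> conjugate G (zpow G x z) (zpow G y z).
Proof. intros [h <-]. exists h. apply conj_by_zpow. Qed.
End GroupFacts.

Lemma sequence_repeats (A : Type) (f : nat -> A) (l : list A) :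
  (forall i, In (f i) l) -> exists i j, i < j /\ f i = f j.
Proof.
  intro Hin. apply NNPP. intro Hnone.
  assert (Hnd : NoDup (map f (seq 0 (S (length l))))).
  { apply (NoDup_nth _ (f 0)). rewrite length_map, length_seq. intros i j Hi Hj Heq.
    rewrite !(map_nth f (seq 0 (S (length l))) 0), !seq_nth in Heq by exact Hi || exact Hj.
    destruct (Nat.lt_trichotomy i j) as [H|[H|H]].
    - exfalso. apply Hnone. exists i, j. auto.
    - exact H.
    - exfalso. apply Hnone. exists j, i. auto. }
  assert (Hincl : incl (map f (seq 0 (S (length l)))) l).
  { intros y Hy. apply in_map_iff in Hy. destruct Hy as [i [<- _]]. apply Hin. }
  pose proof (NoDup_incl_length Hnd Hincl) as Hlen.
  rewrite length_map, length_seq in Hlen. lia.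
Qed.

Section Garside.
Variables (G : Group) (P : G -> Prop) (D : G).
Hypothesis HG : garside_group G P D.
Local Infix "**" := (@gmul G) (at level 40, left associativity).

Lemma P_one : P gone.
Proof. destruct HG as [[H _] _]. exact H. Qed.

Lemma P_mul x y : P x -> P y -> P (x ** y).
Proof. destruct HG as [[_ H] _]. apply H. Qed.

Lemma P_gpow x n : P x -> P (gpow G x n).
Proof. intro Hx. induction n; simpl; auto using P_one, P_mul. Qed.

Lemma P_gprod l : Forall P l -> P (gprod G l).
Proof. induction 1; simpl; auto using P_one, P_mul. Qed.

Lemma P_Delta : P D.
Proof. destruct HG as [_ [_ [_ [_ [_ [H _]]]]]]. exact H. Qed.

Definition simple (s : G) : Prop := P s /\ prefix G P s D.

Lemma simples_finite : exists l : list G, forall s, simple s -> In s l.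
Proof.
  destruct HG as [_ [_ [_ [_ [_ [_ [_ [[l Hl] _]]]]]]]].
  exists l. intros s [Ps Hs]. apply Hl; assumption.
Qed.

Lemma P_simple_decomposition x : P x -> exists l, Forall simple l /\ gprod G l = x.
Proof. destruct HG as [_ [_ [_ [_ [_ [_ [_ [_ H]]]]]]]]. exact (H x). Qed.

Lemma P_generates x : gen G P x.
Proof. destruct HG as [_ [H _]]. apply H. Qed.

(* Conjugation by Delta permutes the simples: if s c = Delta then
   Delta⁻¹ s Delta = d where c d = Delta. *)
Lemma conj_Delta_simple s : simple s -> simple (conj_by G D s).
Proof.
  intros [Ps [c [Pc Hsc]]].
  destruct HG as [_ [_ [_ [_ [_ [_ [Hps _]]]]]]].
  destruct (proj2 (Hps c Pc) (ex_intro _ s (conj Ps Hsc))) as [d [Pd Hcd]].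
  replace (conj_by G D s) with d.
  - split; [exact Pd|]. apply (Hps d Pd). exists c. split; assumption.
  - unfold conj_by. rewrite <- Hcd at 2.
    rewrite !gmulA, <- (gmulA _ _ s c), Hsc, gmulVl, gmul1l. reflexivity.
Qed.

Lemma conj_Delta_pow_simple n s : simple s -> simple (conj_by G (gpow G D n) s).
Proof.
  revert s. induction n; intros s Hs; simpl.
  - rewrite conj_by_one. exact Hs.
  - rewrite conj_by_comp. apply IHn, conj_Delta_simple, Hs.
Qed.

Lemma conj_Delta_pow_P n x : P x -> P (conj_by G (gpow G D n) x).
Proof.
  intro Hx. destruct (P_simple_decomposition x Hx) as [l [Hl <-]].
  rewrite conj_by_gprod. apply P_gprod, Forall_map.
  eapply Forall_impl; [|exact Hl]. intros s Hs. apply (conj_Delta_pow_simple n s Hs).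
Qed.

(* Each simple is fixed by conjugation by some positive power of Delta, since
   its orbit under conjugation by Delta stays in a finite set. *)
Lemma simple_period s : simple s -> exists j, j >= 1 /\ conj_by G (gpow G D j) s = s.
Proof.
  intro Hs. destruct simples_finite as [l Hl].
  destruct (sequence_repeats _ (fun i => conj_by G (gpow G D i) s) l) as [i [j [Hij Heq]]].
  { intro i. apply Hl, conj_Delta_pow_simple, Hs. }
  exists (j - i). split; [lia|].
  replace j with ((j - i) + i) in Heq by lia.
  rewrite gpow_add, conj_by_comp in Heq. symmetry. exact (conj_by_inj _ _ _ _ Heq).
Qed.

(* A common period for the simples in a finite list: the product of their periods. *)
Lemma simples_common_period (l : list G) : exists e, e >= 1 /\
  forall s, In s l -> simple s -> conj_by G (gpow G D e) s = s.
Proof.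
  induction l as [|t l [e [He IH]]].
  - exists 1. split; [lia|]. intros s [].
  - destruct (classic (simple t)) as [Ht|Ht].
    + destruct (simple_period t Ht) as [j [Hj Hjt]]. exists (j * e). split; [nia|].
      intros s [<-|Hs] Hss.
      * rewrite gpow_mul. apply conj_by_gpow_fixed, Hjt.
      * rewrite Nat.mul_comm, gpow_mul. apply conj_by_gpow_fixed, IH; assumption.
    + exists e. split; [exact He|]. intros s [<-|Hs] Hss; [contradiction|auto].
Qed.

(* Simples generate P as a monoid and P generates G as a group, so an element
   commuting with all simples is central. *)
Lemma central_of_commuting_with_simples z :
  (forall s, simple s -> z ** s = s ** z) -> central G z.
Proof.
  intro Hsimple.
  assert (HP : forall x, P x -> z ** x = x ** z).
  { intros x Hx. destruct (P_simple_decomposition x Hx) as [l [Hl <-]].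
    clear Hx. induction Hl as [|s l Hs _ IH]; simpl.
    - symmetry. apply central_one.
    - rewrite gmulA, (Hsimple s Hs), <- gmulA, IH, gmulA. reflexivity. }
  intro x. induction (P_generates x) as [x Hx| |x y _ IHx _ IHy|x _ IHx].
  - apply HP, Hx.
  - symmetry. apply central_one.
  - rewrite gmulA, IHx, <- gmulA, IHy, gmulA. reflexivity.
  - apply (mul_cancel_l _ x). rewrite gmulA, <- IHx, <- gmulA, gmulVr, gmul1r.
    rewrite gmulA, gmulVr, gmul1l. reflexivity.
Qed.

(* Some positive power of Delta fixes every simple, hence is central. *)
Lemma Delta_power_central : exists e, e >= 1 /\ central G (gpow G D e).
Proof.
  destruct simples_finite as [l Hl]. destruct (simples_common_period l) as [e [He Hfix]].
  exists e. split; [exact He|].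
  apply central_of_commuting_with_simples. intros s Hs.
  rewrite <- (Hfix s (Hl s Hs) Hs) at 1. unfold conj_by.
  rewrite !gmulA, gmulVr, gmul1l. reflexivity.
Qed.

(* Atomicity forbids nontrivial invertible elements of P: otherwise
   u u⁻¹ u u⁻¹ ... would be arbitrarily long decompositions of 1. *)
Lemma P_no_units u : P u -> P (ginv u) -> u = gone.
Proof.
  intros Pu Pv. apply NNPP. intro Hne.
  destruct HG as [_ [_ [Hat _]]]. destruct (Hat gone P_one) as [N HN].
  set (l := concat (repeat [u; ginv u] (S N))).
  assert (Hv : ginv u <> gone).
  { intro E. apply Hne. rewrite <- (inv_inv _ u), E, inv_one. reflexivity. }
  assert (Hl : Forall (fun y => P y /\ y <> gone) l).
  { unfold l. generalize (S N) as n. induction n; simpl; auto. }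
  assert (Hprod : gprod G l = gone).
  { unfold l. generalize (S N) as n. induction n; simpl; [reflexivity|].
    rewrite IHn, gmul1r, gmulVr. reflexivity. }
  assert (Hlen : length l = 2 * S N).
  { unfold l. generalize (S N) as n. induction n; simpl; [reflexivity|]. rewrite IHn. lia. }
  specialize (HN l Hl Hprod). lia.
Qed.

(* Unless Delta is trivial, it has infinite order: Delta^(m+1) = 1 would put Delta⁻¹ in P. *)
Lemma Delta_infinite_order t : D <> gone -> zpow G D t = gone -> t = 0%Z.
Proof.
  intros HD Ht.
  assert (Hnot_one : forall m, gpow G D (S m) <> gone).
  { intros m Hm. apply HD, P_no_units; [exact P_Delta|]. simpl in Hm.
    rewrite <- (inv_unique _ _ _ Hm). apply P_gpow, P_Delta. }
  destruct (Z.lt_trichotomy t 0) as [Hneg|[Hzero|Hpos]]; [exfalso | exact Hzero | exfalso].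
  - apply (Hnot_one (Z.to_nat (- t) - 1)). rewrite <- zpow_nat.
    replace (Z.of_nat (S (Z.to_nat (- t) - 1))) with (- t)%Z by lia.
    rewrite zpow_opp, Ht. apply inv_one.
  - apply (Hnot_one (Z.to_nat t - 1)). rewrite <- zpow_nat.
    replace (Z.of_nat (S (Z.to_nat t - 1))) with t by lia. exact Ht.
Qed.

Lemma suffix_refl x : suffix G P x x.
Proof. exists gone. split; [apply P_one | apply gmul1l]. Qed.

Lemma suffix_trans x y z : suffix G P x y -> suffix G P y z -> suffix G P x z.
Proof.
  intros [c [Pc <-]] [d [Pd <-]]. exists (d ** c). split; [apply P_mul; assumption|].
  symmetry. apply gmulA.
Qed.

Lemma suffix_P x y : suffix G P x y -> P x -> P y.
Proof. intros [c [Pc <-]] Px. apply P_mul; assumption. Qed.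

Lemma suffix_antisym x y : suffix G P x y -> suffix G P y x -> x = y.
Proof.
  intros [c [Pc Hc]] [d [Pd Hd]].
  rewrite <- Hc, gmulA in Hd. rewrite <- (gmul1l G x) in Hd at 2.
  apply mul_cancel_r, inv_unique in Hd. subst c.
  rewrite (P_no_units d Pd Pc), inv_one, gmul1l in Hc. exact Hc.
Qed.

Lemma suffix_join (L : list G) : L <> [] -> Forall P L ->
  exists J, P J /\ (forall y, In y L -> suffix G P y J) /\
    (forall c, P c -> (forall y, In y L -> suffix G P y c) -> suffix G P J c).
Proof.
  induction L as [|y L IH]; intros Hne HF; [congruence|].
  inversion HF as [|? ? Py HL]; subst. destruct L as [|z L'].
  - exists y. split; [exact Py|]. split.
    + intros y' [<-|[]]. apply suffix_refl.
    + intros c _ Hc. apply Hc. left. reflexivity.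
  - destruct IH as [J' [PJ' [UB LUB]]]; [congruence|exact HL|].
    destruct HG as [_ [_ [_ [_ [Hlat _]]]]].
    destruct (Hlat y J' Py PJ') as [_ [j [Pj [Hyj [HJj Hj]]]]].
    exists j. split; [exact Pj|]. split.
    + intros w [<-|Hw]; [exact Hyj|]. apply suffix_trans with J'; auto.
    + intros c Pc Hc. apply Hj; [exact Pc | apply Hc; left; reflexivity|].
      apply LUB; [exact Pc|]. intros w Hw. apply Hc. right. exact Hw.
Qed.

(* A suffix-monotone map F with F^T = id that has an orbit inside P has a fixed
   point: the join J of that orbit satisfies J <= F J <= F^2 J <= ... <= F^T J = J. *)
Lemma monotone_periodic_fixed_point (F : G -> G) (T : nat) (x0 : G) :
  (forall x y, suffix G P x y -> suffix G P (F x) (F y)) ->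
  T >= 1 -> (forall x, Nat.iter T F x = x) ->
  (forall i, i < T -> P (Nat.iter i F x0)) ->
  exists J, F J = J.
Proof.
  intros Hmon HT Hper HP.
  assert (Hshift : forall i, Nat.iter i F x0 = F (Nat.iter (i + T - 1) F x0)).
  { intro i. rewrite <- Nat.iter_succ. replace (S (i + T - 1)) with (T + i) by lia.
    rewrite Nat.iter_add, Hper. reflexivity. }
  set (L := map (fun i => Nat.iter i F x0) (seq 0 T)).
  destruct (suffix_join L) as [J [PJ [UB LUB]]].
  - unfold L. destruct T; [lia|]. discriminate.
  - apply Forall_forall. intros y Hy. apply in_map_iff in Hy.
    destruct Hy as [i [<- Hi]]. apply in_seq in Hi. apply HP. lia.
  - assert (Horbit : forall i, suffix G P (Nat.iter i F x0) J).
    { intro i. induction i as [i IH] using (well_founded_induction lt_wf).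
      destruct (Nat.lt_ge_cases i T) as [Hi|Hi].
      - apply UB, in_map_iff. exists i. split; [reflexivity|]. apply in_seq. lia.
      - replace i with (T + (i - T)) by lia. rewrite Nat.iter_add, Hper. apply IH. lia. }
    assert (HJF : suffix G P J (F J)).
    { apply LUB.
      - apply (suffix_P (Nat.iter 0 F x0)); [|apply HP; lia].
        rewrite (Hshift 0). apply Hmon, Horbit.
      - intros y Hy. apply in_map_iff in Hy. destruct Hy as [i [<- _]].
        rewrite Hshift. apply Hmon, Horbit. }
    assert (Hchain : forall i, suffix G P J (Nat.iter i F J)).
    { induction i; simpl; [apply suffix_refl|].
      apply suffix_trans with (F J); [exact HJF | apply Hmon, IHi]. }
    exists J. apply suffix_antisym; [|exact HJF].
    rewrite <- (Hper J) at 2. replace T with (S (T - 1)) by lia.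
    apply Hmon, Hchain.
Qed.

Section Shift.
(* A central element z with Delta⁻¹ z in P, e.g. a central power Delta^e, e >= 1. *)
Variable z : G.
Hypothesis Hz : central G z.
Hypothesis HzD : P (ginv D ** z).

(* z = Delta (Delta⁻¹ z) is itself in P. *)
Lemma P_shift_element : P z.
Proof.
  replace z with (D ** (ginv D ** z)) by (rewrite gmulA, gmulVr, gmul1l; reflexivity).
  apply P_mul; [exact P_Delta | exact HzD].
Qed.

(* If s c = Delta then z s⁻¹ = c (Delta⁻¹ z) is in P. *)
Lemma simple_inv_shift s : simple s -> P (z ** ginv s).
Proof.
  intros [_ [c [Pc Hsc]]].
  replace (ginv s) with (c ** ginv D).
  - rewrite Hz, <- gmulA. apply P_mul; assumption.
  - apply inv_unique. rewrite gmulA, Hsc, gmulVr. reflexivity.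
Qed.

Lemma P_inv_shift p : P p -> exists M, P (gpow G z M ** ginv p).
Proof.
  intro Hp. destruct (P_simple_decomposition p Hp) as [l [Hl <-]]. clear Hp.
  induction Hl as [|s l Hs _ [M HM]]; simpl.
  - exists 0. simpl. rewrite inv_one, gmul1l. exact P_one.
  - exists (S M). rewrite gpow_S_r, inv_mul, <- gmulA, (gmulA _ z), Hz, <- gmulA, gmulA.
    apply P_mul; [exact HM | apply simple_inv_shift, Hs].
Qed.

Lemma shift_into_P M x : exists K, M <= K /\ P (gpow G z K ** x).
Proof.
  assert (Hsome : exists K, P (gpow G z K ** x)).
  { induction (P_generates x) as [x Hx| |x y _ [K1 H1] _ [K2 H2]|x _ [K HK]].
    - exists 0. simpl. rewrite gmul1l. exact Hx.
    - exists 0. simpl. rewrite gmul1l. exact P_one.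
    - exists (K1 + K2). rewrite gpow_add, <- gmulA, (gmulA _ _ x), (central_gpow _ _ K2 Hz x).
      rewrite !gmulA, <- gmulA. apply P_mul; assumption.
    - destruct (P_inv_shift _ HK) as [M' HM']. exists M'.
      replace (ginv x) with (ginv (gpow G z K ** x) ** gpow G z K).
      + rewrite gmulA. apply P_mul; [exact HM' | apply P_gpow, P_shift_element].
      + rewrite inv_mul, <- gmulA, gmulVl, gmul1r. reflexivity. }
  destruct Hsome as [K HK]. exists (M + K). split; [lia|].
  rewrite gpow_add, <- gmulA. apply P_mul; [apply P_gpow, P_shift_element | exact HK].
Qed.
End Shift.
End Garside.

Section Conjugacy.
Variables (G : Group) (P : G -> Prop) (D : G).
Hypothesis HG : garside_group G P D.
Variable e : nat.
Hypothesis He : e >= 1.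
Hypothesis Hcentral : central G (gpow G D e).
Local Infix "**" := (@gmul G) (at level 40, left associativity).

(* The core argument: if r in P satisfies r^N = Delta^(N A) with N >= 1, then
   x ↦ Delta^-A x r is suffix-monotone with period N e and maps the orbit of
   Delta^(N e A) into P; its fixed point J gives J r J⁻¹ = Delta^A. *)
Lemma positive_root_conjugate (r : G) (A N : nat) :
  P r -> N >= 1 -> gpow G r N = gpow G D (N * A) -> conjugate G r (gpow G D A).
Proof.
  intros Pr HN Hroot.
  set (F := fun x => ginv (gpow G D A) ** (x ** r)).
  assert (Hiter : forall i x, Nat.iter i F x = ginv (gpow G D (i * A)) ** (x ** gpow G r i)).
  { induction i; intro x; simpl.
    - rewrite inv_one, gmul1l, gmul1r. reflexivity.
    - rewrite IHi. unfold F. rewrite (Nat.add_comm A), gpow_add, inv_mul.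
      change (r ** gpow G r i) with (gpow G r (S i)). rewrite gpow_S_r, !gmulA. reflexivity. }
  assert (Hmon : forall x y, suffix G P x y -> suffix G P (F x) (F y)).
  { intros x y [c [Pc <-]]. exists (conj_by G (gpow G D A) c).
    split; [apply (conj_Delta_pow_P G P D HG), Pc|].
    unfold F, conj_by. rewrite !gmulA, <- (gmulA _ _ (gpow G D A)), gmulVr, gmul1r.
    reflexivity. }
  destruct (monotone_periodic_fixed_point G P D HG F (N * e) (gpow G D (N * e * A)) Hmon)
    as [J HJ].
  - nia.
  - intro x. rewrite Hiter, (gpow_mul _ r N e), Hroot, <- gpow_mul.
    replace (N * A * e) with (e * (N * A)) by lia. replace (N * e * A) with (e * (N * A)) by lia.
    rewrite gpow_mul. apply conj_by_central_trivial, central_gpow, Hcentral.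
  - intros i Hi. rewrite Hiter.
    replace (N * e * A) with (i * A + (N * e * A - i * A)) by nia.
    rewrite gpow_add, <- gmulA, gmulA, gmulVl, gmul1l.
    apply (P_mul G P D HG); apply (P_gpow G P D HG); [apply (P_Delta G P D HG) | exact Pr].
  - exists (ginv J). unfold F in HJ. change (conj_by G (ginv J) r = gpow G D A).
    unfold conj_by. rewrite inv_inv. apply (mul_cancel_l _ (ginv (gpow G D A))).
    rewrite (gmulA _ J), gmulA, HJ, gmulVr, gmulVl. reflexivity.
Qed.

Lemma Delta_shift_P : P (ginv D ** gpow G D e).
Proof.
  destruct e as [|e']; [lia|]. simpl. rewrite gmulA, gmulVl, gmul1l.
  apply (P_gpow G P D HG), (P_Delta G P D HG).
Qed.

(* The positive-exponent case: choose K >= -a with r = Delta^(e K) h in P; as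
   Delta^(e K) is central, r^n = Delta^(n (a + e K)) with a + e K >= 0, and the
   conjugator given by the core for r also conjugates h to Delta^a. *)
Lemma positive_power_root_conjugate (h : G) (n a : Z) :
  (0 < n)%Z -> zpow G h n = zpow G D (n * a) -> conjugate G h (zpow G D a).
Proof.
  intros Hn Hroot.
  set (z := gpow G D e).
  destruct (shift_into_P G P D HG z Hcentral Delta_shift_P (Z.to_nat (- a)) h)
    as [K [HK PK]].
  assert (HzK : gpow G z K = zpow G D (Z.of_nat (e * K))).
  { unfold z. rewrite <- gpow_mul. symmetry. apply zpow_nat. }
  destruct (positive_root_conjugate (gpow G z K ** h)
              (Z.to_nat (a + Z.of_nat (e * K))) (Z.to_nat n) PK) as [y Hy].
  - lia.
  - rewrite gpow_mul_central by (apply central_gpow, Hcentral).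
    rewrite <- gpow_mul, <- (zpow_nat _ h), Z2Nat.id, Hroot by lia.
    unfold z. rewrite <- gpow_mul, <- !zpow_nat, <- zpow_add. f_equal.
    rewrite !Nat2Z.inj_mul, !Z2Nat.id by nia. ring.
  - change (conj_by G y (gpow G z K ** h) = gpow G D (Z.to_nat (a + Z.of_nat (e * K))))
      in Hy.
    rewrite conj_by_mul, central_conj_invariant in Hy by (apply central_gpow, Hcentral).
    exists y. change (conj_by G y h = zpow G D a). apply (mul_cancel_l _ (gpow G z K)).
    rewrite Hy, HzK, <- zpow_add, <- zpow_nat. f_equal. rewrite Z2Nat.id by nia. ring.
Qed.

(* The general case: a conjugate of h^n is h1^n for a conjugate h1 of h, and
   negative exponents reduce to positive ones by inversion. *)
Lemma power_root_conjugate (h : G) (n a : Z) :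
  n <> 0%Z -> conjugate G (zpow G h n) (zpow G D (n * a)) -> conjugate G h (zpow G D a).
Proof.
  intros Hn [x Hx].
  change (conj_by G x (zpow G h n) = zpow G D (n * a)) in Hx.
  rewrite conj_by_zpow in Hx.
  apply conjugate_trans with (conj_by G x h); [exists x; reflexivity|].
  destruct (proj1 (Z.lt_gt_cases n 0) Hn) as [Hneg|Hpos].
  - apply (positive_power_root_conjugate _ (- n)); [lia|].
    rewrite zpow_opp, Hx, <- zpow_opp. f_equal. ring.
  - exact (positive_power_root_conjugate _ n a Hpos Hx).
Qed.

(* Distinct powers of a nontrivial Delta are never conjugate: their e-th powers
   are central, hence equal, and Delta has infinite order. *)
Lemma Delta_powers_conjugate (p q : Z) :
  D <> gone -> conjugate G (zpow G D p) (zpow G D q) -> p = q.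
Proof.
  intros HD Hconj.
  set (E := Z.of_nat e).
  assert (Hcentral_pow : forall t, central G (zpow G D (t * E))).
  { intro t. rewrite Z.mul_comm, zpow_mul. unfold E. rewrite zpow_nat.
    apply central_zpow, Hcentral. }
  assert (Heq : zpow G D (p * E) = zpow G D (q * E)).
  { apply conjugate_central; [apply Hcentral_pow|].
    rewrite !zpow_mul. apply conjugate_zpow, Hconj. }
  assert (Hone : zpow G D ((p - q) * E) = gone).
  { apply (mul_cancel_r _ (zpow G D (q * E))). rewrite <- zpow_add, gmul1l, <- Heq.
    f_equal. ring. }
  apply (Delta_infinite_order G P D HG) in Hone; [|exact HD]. unfold E in Hone. nia.
Qed.

(* Part (ii): with d = gcd(a, b) = a/a' = b/b', the relation g^(a b') = g^(b a')
   forces m1 b' = m2 a', so a' divides m1 and (g^d)^a' is conjugate to Delta^(a' c). *)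
Lemma gcd_power_conjugate (g : G) (a b : Z) : a <> 0%Z ->
  (exists m, conjugate G (zpow G g a) (zpow G D m)) ->
  (exists m, conjugate G (zpow G g b) (zpow G D m)) ->
  exists m, conjugate G (zpow G g (Z.gcd a b)) (zpow G D m).
Proof.
  intros Ha [m1 H1] [m2 H2].
  set (d := Z.gcd a b).
  assert (Hd : (0 < d)%Z).
  { pose proof (Z.gcd_nonneg a b). pose proof (Z.gcd_eq_0_l a b). unfold d. lia. }
  destruct (Z.gcd_divide_l a b) as [a' Ea]. destruct (Z.gcd_divide_r a b) as [b' Eb].
  fold d in Ea, Eb.
  assert (Ha' : a' <> 0%Z) by (intro E; rewrite E in Ea; lia).
  assert (Hcoprime : Z.gcd a' b' = 1%Z).
  { rewrite <- (Z.div_mul a' d), <- (Z.div_mul b' d), <- Ea, <- Eb by lia.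
    apply Z.gcd_div_gcd; [lia | reflexivity]. }
  assert (Hga : zpow G (zpow G g d) a' = zpow G g a).
  { rewrite <- zpow_mul, Ea, Z.mul_comm. reflexivity. }
  destruct (classic (D = gone)) as [HD|HD].
  - exists 0%Z. apply (power_root_conjugate _ a' 0 Ha').
    rewrite Hga, HD, !zpow_of_one. rewrite HD, zpow_of_one in H1. exact H1.
  - assert (Hm : (m1 * b' = m2 * a')%Z).
    { apply (Delta_powers_conjugate _ _ HD).
      apply conjugate_trans with (zpow G g (a * b')).
      - apply conjugate_sym. rewrite !zpow_mul. apply conjugate_zpow, H1.
      - replace (a * b')%Z with (b * a')%Z by (rewrite Ea, Eb; ring).
        rewrite !zpow_mul. apply conjugate_zpow, H2. }
    destruct (Z.gauss a' b' m1) as [c Ec]; [exists m2; lia | exact Hcoprime |].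
    exists c. apply (power_root_conjugate _ a' c Ha').
    rewrite Hga. replace (a' * c)%Z with m1 by lia. exact H1.
Qed.
End Conjugacy.

Theorem mainTheorem6 (G : Group) (P : G -> Prop) (D : G)
  (HG : garside_group G P D) (g : G) (a b k : Z)
  (ha : a <> 0%Z) (hb : b <> 0%Z) (hk : k <> 0%Z) :
  (conjugate G (zpow G g (k * b)) (zpow G D (k * a)) ->
     conjugate G (zpow G g b) (zpow G D a)) /\
  ((exists m : Z, conjugate G (zpow G g a) (zpow G D m)) ->
   (exists m : Z, conjugate G (zpow G g b) (zpow G D m)) ->
   exists m : Z, conjugate G (zpow G g (Z.gcd a b)) (zpow G D m)).
Proof.
  destruct (Delta_power_central G P D HG) as [e [He Hcentral]].
  split.
  - intro Hconj. apply (power_root_conjugate G P D HG e He Hcentral _ k a hk).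
    rewrite <- zpow_mul, Z.mul_comm. exact Hconj.
  - exact (gcd_power_conjugate G P D HG e He Hcentral g a b ha).
Qed.
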